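(* Let $q:V\to\overline K/\overline R$ be a non-trivial generalized $(\sigma,\varepsilon)$-quadratic form with sesquilinearization $f$, such that $P_q$ spans $\mathrm{PG}(V)$. A vector subspace $U$ of $V$ satisfies $[U]\cap P_q=\emptyset$ and $[U]\cap\ell=\emptyset$ for every line $\ell$ of $\mathrm{PG}(V)$ containing at least two points of $P_q$ (i.e. $U$ defines a quotient of the inclusion embedding of $S_q$ in $\mathrm{PG}(V)$) if and only if $U\subseteq\mathrm{Rad}(f)$ and $U\cap\mathrm{Rad}(q)=\{0\}$.
   Context: $K$ division ring, $(\sigma,\varepsilon)$ admissible pair ($\sigma$ anti-automorphism, $\varepsilon^\sigma\varepsilon=1$, $t^{\sigma^2}=\varepsilon t\varepsilon^{-1}$). $\overline K=K/\{t-t^\sigma\varepsilon\}_{t\in K}$, $\bar t$ class of $t$, $\bar t\circ\lambda=\overline{\lambda^\sigma t\lambda}$; closed subgroup: stable under all $\circ\lambda$; $(\bar t+\overline R)\circ\lambda=\bar t\circ\lambda+\overline R$. Generalized $(\sigma,\varepsilon)$-quadratic form with co-defect closed $\overline R$: $q:V\to\overline K/\overline R$ ($V$ right $K$-vector space) with $q(x\lambda)=q(x)\circ\lambda$ and trace-valued $(\sigma,\varepsilon)$-sesquilinear $f$ ($f(x\lambda,y\mu)=\lambda^\sigma f(x,y)\mu$, $f(y,x)=f(x,y)^\sigma\varepsilon$, $f(x,x)\in\{t+t^\sigma\varepsilon\}$) with $q(x+y)=q(x)+q(y)+(\overline{f(x,y)}+\overline R)$. Non-trivial: not identically $\overline R$.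 $P_q$: points $[x]$ with $q(x)=\overline R$. $[U]$: set of projective points of $U$. $\mathrm{Rad}(f)=\{x:f(x,V)=0\}$, $\mathrm{Rad}(q)=\{x\in\mathrm{Rad}(f):q(x)=\overline R\}$. *)

From HB Require Import structures.
From mathcomp Require Import all_boot all_order all_algebra.
Set Implicit Arguments. Unset Strict Implicit. Unset Printing Implicit Defensive.
Import GRing.Theory.
Local Open Scope ring_scope.

Definition division_ring (K : unitRingType) : Prop :=
  forall x : K, x != 0 -> x \is a GRing.unit.

Definition anti_automorphism (K : unitRingType) (sigma : K -> K) : Prop :=
  [/\ forall x y, sigma (x + y) = sigma x + sigma y,
      forall x y, sigma (x * y) = sigma y * sigma x,
      sigma 1 = 1 & bijective sigma].

Definition admissible_pair (K : unitRingType) (sigma : K -> K) (eps : K) : Prop :=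
  [/\ anti_automorphism sigma, sigma eps * eps = 1
    & forall t, sigma (sigma t) = eps * t * eps^-1].

(* A subgroup Rbar of Kbar = K / {t - t^sigma eps} is encoded by its preimage
   R in K (an additive subgroup containing all t - t^sigma eps). *)
Definition closed_codefect (K : unitRingType) (sigma : K -> K) (eps : K)
    (R : K -> Prop) : Prop :=
  [/\ forall t, R (t - sigma t * eps),
      R 0,
      forall a b, R a -> R b -> R (a - b)
    & forall r l, R r -> R (sigma l * r * l)].

(* Right K-vector spaces are left modules over the converse ring K^c;
   the right scalar multiplication x.lambda is written rsc x lambda. *)
Definition rsc (K : unitRingType) (V : lmodType K^c) (x : V) (l : K) : V :=
  (l : K^c) *: x.

Definition trace_valued_sesq (K : unitRingType) (V : lmodType K^c)
    (sigma : K -> K) (eps : K) (f : V -> V -> K) : Prop :=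
  [/\ forall x y z, f (x + y) z = f x z + f y z,
      forall x y z, f x (y + z) = f x y + f x z,
      forall x y l m, f (rsc x l) (rsc y m) = sigma l * f x y * m,
      forall x y, f y x = sigma (f x y) * eps
    & forall x, exists t, f x x = t + sigma t * eps].

(* The form V -> Kbar/Rbar is given by a
   representative function q : V -> K (Kbar/Rbar is canonically K/R);
   equalities in Kbar/Rbar are equalities modulo R. *)
Definition gen_quadratic_form (K : unitRingType) (V : lmodType K^c)
    (sigma : K -> K) (eps : K) (R : K -> Prop) (q : V -> K) (f : V -> V -> K)
    : Prop :=
  [/\ closed_codefect sigma eps R,
      trace_valued_sesq sigma eps f,
      forall x l, R (q (rsc x l) - sigma l * q x * l)
    & forall x y, R (q (x + y) - q x - q y - f x y)].

Definition nontrivial_form (K : unitRingType) (V : lmodType K^c)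
    (R : K -> Prop) (q : V -> K) : Prop :=
  exists x, ~ R (q x).

Definition singular_vec (K : unitRingType) (V : lmodType K^c)
    (R : K -> Prop) (q : V -> K) (x : V) : Prop :=
  x <> 0 /\ R (q x).

Inductive lin_span (K : unitRingType) (V : lmodType K^c) (S : V -> Prop) : V -> Prop :=
  | lin_span0 : lin_span S 0
  | lin_spanS : forall x l v, S x -> lin_span S v -> lin_span S (rsc x l + v).

Definition subspace (K : unitRingType) (V : lmodType K^c) (U : V -> Prop) : Prop :=
  [/\ U 0, forall x y, U x -> U y -> U (x + y) & forall x l, U x -> U (rsc x l)].

Definition Rad_f (K : unitRingType) (V : lmodType K^c) (f : V -> V -> K) (x : V)
  : Prop := forall y, f x y = 0.

Definition Rad_q (K : unitRingType) (V : lmodType K^c) (R : K -> Prop)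
    (q : V -> K) (f : V -> V -> K) (x : V) : Prop :=
  Rad_f f x /\ R (q x).

(* For [U] inside Rad(f): a vector of [U] on a line through two singular
   points is a radical sum u + w of singular vectors, so f(u, w) = -f(w, w)
   lies in the co-defect and u + w is singular, hence in Rad(q), hence zero.
   Conversely, if x in [U] had f(x, p) <> 0 for some singular p, then
   y := x - p f(x, p)^-1 q(x) is singular and x lies on the line through [p]
   and [y], a line with two points of P_q; so [U] is orthogonal to every
   singular vector, and these span V. *)
From HB Require Import structures.
From mathcomp Require Import all_boot all_order all_algebra.
Set Implicit Arguments. Unset Strict Implicit. Unset Printing Implicit Defensive.
Import GRing.Theory.
Local Open Scope ring_scope.

Section RightScaling.
Variables (K : unitRingType) (V : lmodType K^c).
Implicit Types (x : V) (a b : K).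

Lemma rsc0 x : rsc x 0 = 0. Proof. by rewrite /rsc scale0r. Qed.
Lemma rsc1 x : rsc x 1 = x. Proof. by rewrite /rsc scale1r. Qed.
Lemma rscN x a : rsc x (- a) = - rsc x a. Proof. by rewrite /rsc scaleNr. Qed.
Lemma rscD x a b : rsc x (a + b) = rsc x a + rsc x b.
Proof. by rewrite /rsc scalerDl. Qed.

End RightScaling.

Section Codefect.
Variables (K : unitRingType) (sigma : K -> K) (eps : K) (R : K -> Prop).
Hypothesis HR : closed_codefect sigma eps R.

Lemma codefect0 : R 0. Proof. by case: HR. Qed.

Lemma codefectB a b : R a -> R b -> R (a - b).
Proof. by case: HR => _ _ + _; apply. Qed.

Lemma codefectN a : R a -> R (- a).
Proof. by rewrite -sub0r; apply: codefectB codefect0. Qed.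

Lemma codefectD a b : R a -> R b -> R (a + b).
Proof. by move=> Ra Rb; rewrite -[b]opprK; apply/codefectB/codefectN. Qed.

Lemma codefect_conj r l : R r -> R (sigma l * r * l).
Proof. by case: HR => _ _ _; apply. Qed.

End Codefect.

Section Sesquilinear.
Variables (K : unitRingType) (sigma : K -> K) (eps : K) (V : lmodType K^c).
Variable f : V -> V -> K.
Hypothesis Hf : trace_valued_sesq sigma eps f.
Hypothesis sigma1 : sigma 1 = 1.

Lemma sesq0l z : f 0 z = 0.
Proof.
case: Hf => fDl _ _ _ _; apply: (addrI (f 0 z)).
by rewrite -fDl !addr0.
Qed.

Lemma sesq0r z : f z 0 = 0.
Proof.
case: Hf => _ fDr _ _ _; apply: (addrI (f z 0)).
by rewrite -fDr !addr0.
Qed.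

Lemma sesq_scaler x y m : f x (rsc y m) = f x y * m.
Proof. by case: Hf => _ _ fsc _ _; rewrite -{1}(rsc1 x) fsc sigma1 mul1r. Qed.

Lemma sesq_span_r (S : V -> Prop) x v :
  (forall p, S p -> f x p = 0) -> lin_span S v -> f x v = 0.
Proof.
case: Hf => _ fDr _ _ _ fxS.
elim=> [|p l w Sp _ IH]; first exact: sesq0r.
by rewrite fDr sesq_scaler fxS // IH mul0r addr0.
Qed.

End Sesquilinear.

Section QuadraticForm.
Variables (K : unitRingType) (sigma : K -> K) (eps : K) (V : lmodType K^c).
Variables (R : K -> Prop) (q : V -> K) (f : V -> V -> K).
Hypothesis Hq : gen_quadratic_form sigma eps R q f.

Let HR : closed_codefect sigma eps R. Proof. by case: Hq. Qed.

Lemma qform_scale_singular w l : R (q w) -> R (q (rsc w l)).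
Proof.
case: Hq => _ _ qsc _ Rw.
rewrite -[q _](subrK (sigma l * q w * l)).
exact/(codefectD HR)/(codefect_conj HR).
Qed.

Lemma qform_add_singular x y :
  R (q x + f x y) -> R (q y) -> R (q (x + y)).
Proof.
case: Hq => _ _ _ qD Rxy Ry.
have -> : q (x + y) = (q (x + y) - q x - q y - f x y) + (q x + f x y) + q y.
  rewrite [q x + _]addrC addrA -[_ - f x y + f x y]addrA addNr addr0.
  by rewrite [_ - q x - q y + q x]addrAC !subrK.
exact/(codefectD HR)/Ry/(codefectD HR).
Qed.

Lemma sesq_diag_singular w : R (q w) -> R (f w w).
Proof.
case: Hq => _ _ _ qD Rw.
have Rww : R (q (w + w)).
  by rewrite -{1 2}(rsc1 w) -rscD; apply: qform_scale_singular.
have := codefectB HR (codefectB HR (codefectB HR Rww Rw) Rw) (qD w w).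
by rewrite subKr.
Qed.

Lemma radical_sum_singular u w :
  Rad_f f (u + w) -> R (q u) -> R (q w) -> R (q (u + w)).
Proof.
case: Hq => _ [fDl _ _ _ _] _ _ rad Ru Rw.
apply: qform_add_singular => //.
have fuw : f u w = - f w w.
  by apply/eqP; rewrite -addr_eq0 -fDl rad.
by rewrite fuw; apply/(codefectD HR)/(codefectN HR)/sesq_diag_singular.
Qed.

Hypothesis Kdiv : division_ring K.
Hypothesis sigma1 : sigma 1 = 1.

Lemma nonsingular_on_singular_line x p :
  ~ R (q x) -> singular_vec R q p -> f x p != 0 ->
  exists y a, [/\ singular_vec R q y, forall l, y <> rsc p l
                & x = rsc p a + rsc y 1].
Proof.
case: Hq => _ Hf _ _ nRx [_ Rp] fxp_neq0.
set lam := - ((f x p)^-1 * q x).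
have xE l : x = rsc p (l - lam) + (x + rsc p lam - rsc p l).
  by rewrite rscD rscN addrC addrA subrK addrK.
have not_on_p l : x + rsc p lam <> rsc p l.
  move=> yE; apply: nRx; rewrite (xE l) yE subrr addr0.
  exact: qform_scale_singular.
exists (x + rsc p lam), (- lam); split=> //.
- split; first by rewrite -(rsc0 p); apply: not_on_p.
  apply: qform_add_singular; last exact: qform_scale_singular.
  rewrite (sesq_scaler Hf sigma1) /lam mulrN mulrA.
  by rewrite mulrV ?Kdiv // mul1r subrr; apply: codefect0 HR.
- by rewrite rsc1 {1}(xE 0) rsc0 subr0 sub0r.
Qed.

Definition meets_no_singular_point (U : V -> Prop) :=
  forall x, U x -> ~ singular_vec R q x.

Definition meets_no_singular_line (U : V -> Prop) :=
  forall x y, singular_vec R q x -> singular_vec R q y ->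
    (forall l, y <> rsc x l) ->
    forall a b, U (rsc x a + rsc y b) -> rsc x a + rsc y b = 0.

Lemma orthogonal_singular_of_no_line U x p :
  meets_no_singular_point U -> meets_no_singular_line U ->
  U x -> singular_vec R q p -> f x p = 0.
Proof.
move=> no_pt no_line Ux Sp.
have [_ Hf _ _] := Hq.
case: (x =P 0) => [x0|xn0]; first by rewrite x0 (sesq0l Hf).
have nRx : ~ R (q x) by move=> Rx; apply: (no_pt x Ux).
have [//|fxp_neq0] := eqVneq (f x p) 0.
have [y [a [Sy not_on_p xE]]] := nonsingular_on_singular_line nRx Sp fxp_neq0.
by case: xn0; rewrite xE; apply: (no_line p y) => //; rewrite -xE.
Qed.

End QuadraticForm.

Theorem mainTheorem13 (K : unitRingType) (sigma : K -> K) (eps : K)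
    (V : lmodType K^c) (R : K -> Prop) (q : V -> K) (f : V -> V -> K)
    (U : V -> Prop) :
  division_ring K ->
  admissible_pair sigma eps ->
  gen_quadratic_form sigma eps R q f ->
  nontrivial_form R q ->
  (* P_q spans PG(V) *)
  (forall v : V, lin_span (singular_vec R q) v) ->
  subspace U ->
  ( ( (* [U] meets no point of P_q *)
      (forall x, U x -> ~ singular_vec R q x) /\
      (* [U] meets no line spanned by two distinct points [x] <> [y] of P_q *)
      (forall x y, singular_vec R q x -> singular_vec R q y ->
         (forall l, y <> rsc x l) ->
         forall a b, U (rsc x a + rsc y b) -> rsc x a + rsc y b = 0) )
    <->
    ( (forall x, U x -> Rad_f f x) /\
      (forall x, U x -> Rad_q R q f x -> x = 0) ) ).
Proof.
move=> Kdiv [[_ _ sigma1 _] _ _] Hq _ spanV _.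
have [_ Hf _ _] := Hq.
split=> [[no_pt no_line] | [radU radqU]].
- split=> [x Ux v | x Ux [_ Rx]].
    apply: (sesq_span_r Hf sigma1 _ (spanV v)) => p.
    exact: (orthogonal_singular_of_no_line Hq Kdiv sigma1 no_pt no_line).
  by case: (x =P 0) => // xn0; case: (no_pt x Ux).
- split=> [x Ux [xn0 Rx] | x y [_ Rx] [_ Ry] _ a b Uz].
    by case: xn0; apply: radqU => //; split=> //; apply: radU.
  apply: radqU => //; split; first exact: radU.
  by apply: (radical_sum_singular Hq (radU _ Uz)); apply: (qform_scale_singular Hq).
Qed.
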